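(* For every integer $d \ge 2$, there exists a monoid $H$ in $\mathcal{C}_d$ having full system of sets of lengths, i.e. $\mathcal{L}(H) = \mathbb{P}_{\mathrm{fin}}$.
   Context: Monoids are commutative, cancellative, reduced. $\mathcal{C}_d$ is the collection of all rank-$d$ submonoids of free commutative monoids of finite rank (rank = rank of the Grothendieck group). For an atomic monoid $H$ and $x\in H$, $\mathsf{L}(x)$ is the set of all $n$ such that $x$ is a sum of $n$ atoms; $\mathcal{L}(H)=\{\mathsf{L}(x)\mid x\in H\}$. $\mathbb{P}_{\mathrm{fin}} := \{\{0\},\{1\}\} \cup \{S \subset \mathbb{Z}_{\ge 2} \mid S \text{ finite}\}$. *)

From HB Require Import structures.
From mathcomp Require Import all_boot all_order all_algebra.
Set Implicit Arguments. Unset Strict Implicit. Unset Printing Implicit Defensive.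
Import Order.TTheory GRing.Theory Num.Theory.

(* The free commutative monoid of rank n is N^n, represented as
   {ffun 'I_n -> nat} with pointwise addition. *)
Definition vzero (n : nat) : {ffun 'I_n -> nat} := [ffun _ => 0%N].
Definition vadd (n : nat) (x y : {ffun 'I_n -> nat}) : {ffun 'I_n -> nat} :=
  [ffun i => (x i + y i)%N].
Definition vsum (n : nat) (s : seq {ffun 'I_n -> nat}) : {ffun 'I_n -> nat} :=
  foldr (@vadd n) (vzero n) s.

Definition submonoid (n : nat) (H : {ffun 'I_n -> nat} -> Prop) : Prop :=
  H (vzero n) /\ (forall x y, H x -> H y -> H (vadd x y)).

Definition toQ (n : nat) (x : {ffun 'I_n -> nat}) : 'rV[rat]_n :=
  \row_i ((x i)%:R : rat).

(* The rank of the Grothendieck group of H (the subgroup of Z^n generated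
   by H) equals d, i.e. the maximal number of Q-linearly independent
   elements of H is d. *)
Definition has_rank (n : nat) (H : {ffun 'I_n -> nat} -> Prop) (d : nat) : Prop :=
  (exists s : seq {ffun 'I_n -> nat},
      (forall x, x \in s -> H x) /\ size s = d /\ free (map (@toQ n) s)) /\
  (forall s : seq {ffun 'I_n -> nat},
      (forall x, x \in s -> H x) -> free (map (@toQ n) s) -> (size s <= d)%N).

(* Atoms of H: nonzero elements (non-units; H is reduced) that are not a
   sum of two non-units. *)
Definition atom (n : nat) (H : {ffun 'I_n -> nat} -> Prop) (a : {ffun 'I_n -> nat}) : Prop :=
  H a /\ a <> vzero n /\
  (forall b c, H b -> H c -> a = vadd b c -> b = vzero n \/ c = vzero n).

Definition lengths (n : nat) (H : {ffun 'I_n -> nat} -> Prop) (x : {ffun 'I_n -> nat})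
  (k : nat) : Prop :=
  exists s : seq {ffun 'I_n -> nat},
    size s = k /\ (forall a, a \in s -> atom H a) /\ vsum s = x.

Definition atomic (n : nat) (H : {ffun 'I_n -> nat} -> Prop) : Prop :=
  forall x, H x -> exists k, lengths H x k.

Definition Pfin (S : nat -> Prop) : Prop :=
  (forall k, S k <-> k = 0%N) \/ (forall k, S k <-> k = 1%N) \/
  ((exists k, S k) /\ (forall k, S k -> (2 <= k)%N) /\
   (exists m, forall k, S k -> (k <= m)%N)).

Definition full_system (n : nat) (H : {ffun 'I_n -> nat} -> Prop) : Prop :=
  (forall x, H x -> Pfin (lengths H x)) /\
  (forall S, Pfin S -> exists x, H x /\ (forall k, lengths H x k <-> S k)).

(* In N^d the coordinates 2, ..., d-1 only carry free unit generators, which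
   raise the rank to d.  In the first two coordinates every finite set L of
   integers >= 2 gets a block of generators A_l = (X + 1 - l, 1) and
   B_l = (1, T * (D / (l - 1))), l in L, where D is divisible by every l - 1,
   together with the target x = (X, T * D + 1) = A_l + (l - 1) B_l.  The
   constants of a block dwarf all coordinates of the earlier blocks.  In a
   factorization of x no later generator fits; counting the first coordinate
   forces some A_l; modulo T the second coordinate then rules out earlier
   generators and further A's, and the first coordinate leaves exactly l - 1
   B's.  Hence L(x) = L.  Each generator has mass 1 off one of the first two
   coordinates, where every nonzero element has positive mass, so it is an
   atom. *)

From mathcomp Require Import all_boot all_order all_algebra.
From mathcomp Require Import zify.
From Stdlib Require Import Classical.

Set Implicit Arguments. Unset Strict Implicit. Unset Printing Implicit Defensive.
Import GRing.Theory.

Lemma size_le_sum (T : eqType) (r : seq T) (F : T -> nat) :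
  (forall x, x \in r -> 0 < F x) -> size r <= \sum_(x <- r) F x.
Proof. by move=> F_gt0; rewrite -sum1_size big_seq [X in _ <= X]big_seq leq_sum. Qed.

Lemma sum_le_size_mul (T : eqType) (r : seq T) (F : T -> nat) K :
  (forall x, x \in r -> F x <= K) -> \sum_(x <- r) F x <= size r * K.
Proof.
move=> FK; rewrite -sum1_size big_distrl /= big_seq [X in _ <= X]big_seq.
by apply: leq_sum => x /FK; rewrite mul1n.
Qed.

Lemma sum_supp1 (I : finType) (P : pred I) (F : I -> nat) j :
  P j -> (forall i, P i -> i != j -> F i = 0) -> \sum_(i | P i) F i = F j.
Proof. by move=> Pj F0; rewrite (bigD1 j) //= big1 ?addn0 // => i /andP[]; apply: F0. Qed.

Lemma bounded_pred_seq (S : nat -> Prop) N :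
  (forall k, S k -> k < N) -> exists s : seq nat, forall k, S k <-> k \in s.
Proof.
elim: N S => [|N IH] S S_lt; first by exists [::] => k; split=> // /S_lt.
have [s Ss] := IH (fun k => S k /\ k < N) (fun k => @proj2 _ _).
case: (classic (S N)) => SN; [exists (N :: s) | exists s] => k; rewrite ?inE.
  split=> [Sk | /orP[/eqP-> // | /Ss[] //]].
  have := S_lt k Sk; rewrite ltnS leq_eqVlt => /orP[-> // | k_lt].
  by apply/orP; right; apply/Ss.
split=> [Sk | /Ss[] //]; apply/Ss; split=> //.
by have := S_lt k Sk; rewrite ltnS leq_eqVlt => /orP[/eqP kN | //]; rewrite kN in Sk.
Qed.

Section FreeMonoid.
Variable n : nat.
Implicit Types (H : {ffun 'I_n -> nat} -> Prop) (x y a v : {ffun 'I_n -> nat}).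
Implicit Types (s : seq {ffun 'I_n -> nat}).

Lemma vsumE s i : vsum s i = \sum_(v <- s) v i.
Proof. by elim: s => [|v s IH]; rewrite ?big_nil ?big_cons /= ffunE ?IH. Qed.

Lemma vadd0 x : vadd x (vzero n) = x.
Proof. by apply/ffunP => i; rewrite !ffunE addn0. Qed.

Lemma vadd0l x : vadd (vzero n) x = x.
Proof. by apply/ffunP => i; rewrite !ffunE. Qed.

Lemma leq_vsum s v i : v \in s -> v i <= vsum s i.
Proof. by rewrite vsumE => /perm_to_rem/(perm_big _)->; rewrite big_cons leq_addr. Qed.

Lemma total_gt0 x : x <> vzero n -> 0 < \sum_i x i.
Proof.
move=> x0; rewrite lt0n sum_nat_eq0; apply: contra_notN x0 => /forallP x0.
by apply/ffunP => i; rewrite ffunE; apply/eqP/x0.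
Qed.

Lemma vsum_eq0 s : vsum s = vzero n -> forall v, v \in s -> v = vzero n.
Proof.
move=> s0 v vs; apply/ffunP => i; apply/eqP; rewrite ffunE -leqn0.
by have := leq_vsum i vs; rewrite s0 ffunE.
Qed.

Lemma vsum_atoms_eq0 H s :
  (forall a, a \in s -> atom H a) -> vsum s = vzero n -> s = [::].
Proof.
case: s => // a s atoms /vsum_eq0/(_ a (mem_head _ _)).
by case: (atoms a (mem_head _ _)) => _ [].
Qed.

Lemma submonoid_vsum H s :
  submonoid H -> (forall v, v \in s -> H v) -> H (vsum s).
Proof.
case=> H0 HD; elim: s => //= v s IH Hs; apply: HD; first by apply: Hs; rewrite mem_head.
by apply: IH => w ws; apply: Hs; rewrite inE ws orbT.
Qed.

Lemma mem_of_lengths H x k : submonoid H -> lengths H x k -> H x.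
Proof. by move=> monH [s [_ [atoms <-]]]; apply: submonoid_vsum => // v /atoms []. Qed.

Lemma lengths_vzero H k : lengths H (vzero n) k <-> k = 0.
Proof.
split=> [[s [<- [atoms /(vsum_atoms_eq0 atoms) ->]]] // | ->].
by exists [::].
Qed.

Lemma lengths_atom H a k : submonoid H -> atom H a -> lengths H a k <-> k = 1.
Proof.
move=> monH atom_a; split=> [[s [<- [atoms sa]]] | ->]; last first.
  exists [:: a]; split=> //; split; last exact: vadd0.
  by move=> b; rewrite inE => /eqP->.
case: s atoms sa => [|b s] atoms sa; first by case: atom_a => _ []; rewrite -sa.
have atoms_s w : w \in s -> atom H w by move=> ws; apply: atoms; rewrite inE ws orbT.
have Hb : H b by case: (atoms b (mem_head _ _)).
have Hs : H (vsum s) by apply: submonoid_vsum => // w /atoms_s[].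
case: atom_a => _ [_ /(_ b (vsum s) Hb Hs (esym sa))] [b0 | s0].
  by case: (atoms b (mem_head _ _)) => _ [].
by rewrite (vsum_atoms_eq0 atoms_s s0).
Qed.

Lemma lengths_le_total H x k : lengths H x k -> k <= \sum_i x i.
Proof.
case=> s [<- [atoms <-]]; under eq_bigr do rewrite vsumE.
rewrite exchange_big /= size_le_sum // => v /atoms[_ [v0 _]].
exact: total_gt0.
Qed.

Lemma Pfin_lengths H x : submonoid H -> atomic H -> H x -> Pfin (lengths H x).
Proof.
move=> monH atomicH Hx.
have [->|x0] := eqVneq x (vzero n); first by left => k; apply: lengths_vzero.
case: (classic (atom H x)) => [atom_x | not_atom_x].
  by right; left => k; apply: lengths_atom.
right; right; split; first exact: atomicH.
split; last by exists (\sum_i x i) => k; apply: lengths_le_total.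
move=> [|[|k]] // [s [size_s [atoms sx]]]; case: s size_s atoms sx => [|b [|]] //= _ atoms.
  by move=> x0'; rewrite -x0' eqxx in x0.
by rewrite vadd0 => bx; case: not_atom_x; rewrite -bx; apply: atoms; rewrite mem_head.
Qed.

Definition mass_off (k : 'I_n) x := \sum_(i | i != k) x i.

Lemma mass_off_vadd k x y : mass_off k (vadd x y) = mass_off k x + mass_off k y.
Proof. by rewrite /mass_off -big_split; apply: eq_bigr => i _; rewrite ffunE. Qed.

Lemma mass_off_vzero k : mass_off k (vzero n) = 0.
Proof. by rewrite /mass_off big1 // => i _; rewrite ffunE. Qed.

Lemma atom_of_mass_off1 H k a :
  H a -> (forall x, H x -> x <> vzero n -> 0 < mass_off k x) -> mass_off k a = 1 ->
  atom H a.
Proof.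
move=> Ha mass_gt0 a1; split=> //; split=> [a0 | b c Hb Hc abc].
  by move: a1; rewrite a0 mass_off_vzero.
have [|/eqP/(mass_gt0 _ Hb) b_gt0] := eqVneq b (vzero n); first by left.
have [|/eqP/(mass_gt0 _ Hc) c_gt0] := eqVneq c (vzero n); first by right.
by move: a1; rewrite abc mass_off_vadd; lia.
Qed.

End FreeMonoid.

Section Generated.
Variables (n : nat) (G : {ffun 'I_n -> nat} -> Prop).
Implicit Types (x a v : {ffun 'I_n -> nat}) (s : seq {ffun 'I_n -> nat}).

Definition generated x :=
  exists2 s, (forall v, v \in s -> G v) & vsum s = x.

Lemma generated_submonoid : submonoid generated.
Proof.
split; first by exists [::].
move=> _ _ [s Gs <-] [t Gt <-]; exists (s ++ t).
  by move=> v; rewrite mem_cat => /orP[/Gs | /Gt].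
by apply/ffunP => i; rewrite ffunE !vsumE big_cat.
Qed.

Lemma generated_gen v : G v -> generated v.
Proof. by exists [:: v]; [move=> w; rewrite inE => /eqP-> | exact: vadd0]. Qed.

Lemma generated_vsum s : (forall v, v \in s -> G v) -> generated (vsum s).
Proof. by exists s. Qed.

Lemma gen_of_atom a : atom generated a -> G a.
Proof.
case=> [[s Gs sa] [a0 a_irr]]; elim: s Gs sa => [|v s IH] Gs sa; first by case: a0.
have Gv : G v by apply: Gs; rewrite mem_head.
have Gs' w : w \in s -> G w by move=> ws; apply: Gs; rewrite inE ws orbT.
case: (a_irr v (vsum s) (generated_gen Gv) (generated_vsum Gs') (esym sa)) => [v0 | s0].
  by apply: IH Gs' _; rewrite -sa /= v0 vadd0l.
by rewrite -sa /= s0 vadd0.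
Qed.

Lemma generated_mass_off_gt0 k :
  (forall v, G v -> 0 < mass_off k v) ->
  forall x, generated x -> x <> vzero n -> 0 < mass_off k x.
Proof.
move=> mass_gt0 _ [[|v s] Gs <-] // _.
by rewrite /= mass_off_vadd ltn_addr // mass_gt0 //; apply: Gs; rewrite mem_head.
Qed.

Hypothesis atom_gen : forall v, G v -> atom generated v.

Lemma lengths_generatedE x k :
  lengths generated x k <->
  exists s, [/\ size s = k, forall v, v \in s -> G v & vsum s = x].
Proof.
split=> [[s [sk [atoms sx]]] | [s [sk Gs sx]]]; exists s.
  by split=> // v /atoms/gen_of_atom.
by split=> //; split=> // v /Gs/atom_gen.
Qed.

Lemma atomic_generated : atomic generated.
Proof. by move=> _ [s Gs <-]; exists (size s); apply/lengths_generatedE; exists s. Qed.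

End Generated.

Section BlockCount.
Variables (L : seq nat) (M P T q X : nat).
Hypotheses (L_bound : forall l, l \in L -> 1 < l < M) (q_gt0 : 0 < q).
Hypotheses (MT : M * P.+1 <= T) (YX : (T * q).+1 * P.+1 < X).

(* The projection to the first two coordinates of a generator that may occur
   in a factorization of (X, T * q + 1): an A-generator of the block, a
   B-generator of the block, or a generator of an earlier block. *)
Definition block_item (p : nat * nat) : Prop :=
  [\/ exists2 l, l \in L & p = (X.+1 - l, 1),
      [/\ p.1 = 1, 0 < p.2 & T %| p.2]
    | [/\ 0 < p.1 <= P & 0 < p.2 <= P]].

Variable s : seq (nat * nat).
Hypotheses (s_items : forall p : nat * nat, p \in s -> block_item p).
Hypotheses (sum1 : \sum_(p <- s) p.1 = X) (sum2 : \sum_(p <- s) p.2 = (T * q).+1).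

Lemma L_le_X l : l \in L -> l <= X.
Proof. by move/L_bound; nia. Qed.

Lemma block_item_gt0 (p : nat * nat) : p \in s -> 0 < p.1 /\ 0 < p.2.
Proof.
by move/s_items => [[l /L_le_X lX ->] | [-> ->] | [/andP[-> _] /andP[-> _]]] //=; lia.
Qed.

Lemma block_has_A : exists2 l, l \in L & (X.+1 - l, 1) \in s.
Proof.
have [/hasP[l Ll As] | noA] := boolP (has (fun l => (X.+1 - l, 1) \in s) L).
  by exists l.
have size_s : size s <= (T * q).+1.
  by rewrite -sum2 size_le_sum // => p /block_item_gt0[].
suff : X <= size s * P.+1 by nia.
rewrite -sum1; apply: sum_le_size_mul => p sp.
case: (s_items sp) => [[l Ll ep] | [-> _ _] | [/andP[_ pP] _]] //; last by lia.
by case/negP: noA; apply/hasP; exists l; rewrite -?ep.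
Qed.

Lemma size_block_mem : size s \in L.
Proof.
have [l Ll As] := block_has_A; set A := (X.+1 - l, 1) in As.
set r := rem A s; have rs p : p \in r -> p \in s by apply: mem_rem.
have size_s : size s = (size r).+1 := perm_size (perm_to_rem As).
have lX := L_le_X Ll; have /andP[l_gt1 lM] := L_bound Ll.
have r1 : \sum_(p <- r) p.1 = l.-1 by move: sum1; rewrite (big_rem _ As) -/r /=; lia.
have r2 : \sum_(p <- r) p.2 = T * q by move: sum2; rewrite (big_rem _ As) -/r /=; lia.
have size_r : size r <= l.-1 by rewrite -r1 size_le_sum // => p /rs/block_item_gt0[].
(* The items of r whose second coordinate is not divisible by T contribute a
   multiple of T to the second coordinate, but less than T: so none exist. *)
pose nd (p : nat * nat) := ~~ (T %| p.2).
have nd_small : \sum_(p <- r | nd p) p.2 < T.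
  rewrite big_mkcond /=; apply: leq_ltn_trans (_ : size r * P.+1 < T); last by nia.
  apply: sum_le_size_mul => p /rs/s_items; rewrite /nd; case: ifP => // ndp.
  by case=> [[l' _ ->] | [_ _ Tp] | [_ /andP[_ pP]]] //=; [rewrite Tp in ndp | lia].
have nd_dvd : T %| \sum_(p <- r | nd p) p.2.
  have : T %| \sum_(p <- r) p.2 by rewrite r2 dvdn_mulr.
  by rewrite (bigID nd) /= dvdn_addl //; apply: dvdn_sum => p /negbNE.
have nd0 : \sum_(p <- r | nd p) p.2 = 0.
  apply/eqP; rewrite -leqn0 leqNgt; apply/negP => pos.
  by have := dvdn_leq pos nd_dvd; lia.
have r_B (p : nat * nat) : p \in r -> p.1 = 1.
  move=> rp; have [p1_gt0 p2_gt0] := block_item_gt0 (rs _ rp).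
  have p_div : T %| p.2.
    move/eqP: nd0; rewrite sum_nat_seq_eq0 => /allP/(_ p rp).
    by rewrite /nd; case: (T %| p.2) => //= /eqP p0; lia.
  case: (s_items (rs _ rp)) => [[l' _ ep] | [] // | [_ /andP[_ pP]]].
    by move: p_div; rewrite ep /= dvdn1 => /eqP T1; nia.
  by have := dvdn_leq p2_gt0 p_div; nia.
have : size r = l.-1 by rewrite -r1 -sum1_size; apply: eq_big_seq => p /r_B ->.
by rewrite size_s => ->; rewrite prednK // ltnW.
Qed.

End BlockCount.

(* Since unpickle enumerates all finite lists of naturals, every finite set of
   integers >= 2 is [lens m] for some block index m. *)
Definition lens (m : nat) : seq nat := [seq l <- odflt [::] (unpickle m) | 1 < l].
Definition lsup m := (\max_(l <- lens m) l).+1.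

(* [low m] dominates every coordinate of the generators and targets of the
   blocks before m; it is the [xtop] of the previous block (lemma lowS). *)
Fixpoint low m :=
  if m is k.+1 then ((lsup k * (low k).+1 * (lsup k)`!).+1 * (low k).+1).+1 else 0.

Definition tmod m := lsup m * (low m).+1.
Definition ytop m := (tmod m * (lsup m)`!).+1.
Definition xtop m := (ytop m * (low m).+1).+1.

Lemma lowS m : low m.+1 = xtop m. Proof. by []. Qed.

Lemma lens_pickle (s : seq nat) : lens (pickle s) = [seq l <- s | 1 < l].
Proof. by rewrite /lens pickleK. Qed.

Lemma lens_bound m l : l \in lens m -> 1 < l < lsup m.
Proof.
move=> ml; move: (ml); rewrite mem_filter => /andP[-> _] /=.
by rewrite ltnS (@leq_bigmax_seq _ (lens m) xpredT (fun l => l) l ml).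
Qed.

Lemma dvdn_lens_fact m l : l \in lens m -> l.-1 %| (lsup m)`!.
Proof. by move/lens_bound => lm; apply: dvdn_fact; lia. Qed.

Lemma lens_fact_div_gt0 m l : l \in lens m -> 0 < (lsup m)`! %/ l.-1.
Proof.
move=> ml; have := lens_bound ml => lm.
by rewrite divn_gt0 ?(dvdn_leq (fact_gt0 _) (dvdn_lens_fact ml)) //; lia.
Qed.

Lemma low_lsup_lt_xtop m : low m + lsup m < xtop m.
Proof. have := fact_gt0 (lsup m); rewrite /xtop /ytop /tmod /lsup; nia. Qed.

Lemma ytop_lt_xtop m : ytop m < xtop m.
Proof. rewrite /xtop; nia. Qed.

Lemma low_lt_tmod m : low m < tmod m.
Proof. rewrite /tmod /lsup; nia. Qed.

Lemma xtop_le_low m m' : m < m' -> xtop m <= low m'.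
Proof.
elim: m' => // m' IH; rewrite ltnS leq_eqVlt => /orP[/eqP-> // | /IH].
by move/leq_trans; apply; rewrite lowS; have := low_lsup_lt_xtop m'; lia.
Qed.

Section RowSpan.
Variables (K : fieldType) (n : nat).
Local Open Scope ring_scope.

Lemma size_le_of_free (X : seq 'rV[K]_n) : free X -> (size X <= n)%N.
Proof.
move=> /eqnP <-; apply: leq_trans (dimvS (subvf _)) _.
by rewrite dimvf dim_matrix mul1r.
Qed.

Lemma free_of_span_delta (X : seq 'rV[K]_n) :
  size X = n -> (forall j, delta_mx 0 j \in <<X>>%VS) -> free X.
Proof.
move=> sizeX deltaX; rewrite /free eqn_leq dim_span sizeX /=.
have : (fullv <= <<X>>)%VS.
  apply/subvP => v _; rewrite (row_sum_delta v); apply: memv_suml => j _.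
  exact: memvZ.
by move/dimvS; rewrite dimvf dim_matrix mul1r.
Qed.

End RowSpan.

Section Construction.
Variables (d : nat) (hd : 1 < d).

Definition i0 : 'I_d := Ordinal (ltnW hd).
Definition i1 : 'I_d := Ordinal hd.

Definition vec2 (u v : nat) : {ffun 'I_d -> nat} :=
  [ffun i => if val i == 0 then u else if val i == 1 then v else 0].
Definition unitv (j : nat) : {ffun 'I_d -> nat} := [ffun i => (val i == j) : nat].

Definition genA m l := vec2 ((xtop m).+1 - l) 1.
Definition genB m l := vec2 1 (tmod m * ((lsup m)`! %/ l.-1)).
Definition target m := vec2 (xtop m) (ytop m).

Definition gens (v : {ffun 'I_d -> nat}) : Prop :=
  (exists m l, l \in lens m /\ (v = genA m l \/ v = genB m l)) \/
  (exists2 j, 1 < j < d & v = unitv j).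

Local Notation item m := (block_item (lens m) (low m) (tmod m) (xtop m)).

Lemma genA_item m m' l :
  l \in lens m' -> (xtop m').+1 - l <= xtop m -> item m ((xtop m').+1 - l, 1).
Proof.
move=> m'l le_x; have := lens_bound m'l; have := low_lsup_lt_xtop m'.
case: (ltngtP m' m) => [/xtop_le_low lt_m' | /xtop_le_low lt_m | <-] lx lm.
- by constructor 3; split=> /=; lia.
- lia.
- by constructor 1; exists l.
Qed.

Lemma genB_item m m' l :
  l \in lens m' -> tmod m' * ((lsup m')`! %/ l.-1) <= ytop m ->
  item m (1, tmod m' * ((lsup m')`! %/ l.-1)).
Proof.
move=> m'l le_y; have t_gt0 : 0 < tmod m' by have := low_lt_tmod m'; lia.
have b_gt0 : 0 < tmod m' * ((lsup m')`! %/ l.-1).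
  by rewrite muln_gt0 t_gt0 lens_fact_div_gt0.
have b_lt : tmod m' * ((lsup m')`! %/ l.-1) < ytop m'.
  by rewrite /ytop ltnS leq_mul2l leq_div orbT.
case: (ltngtP m' m) => [/xtop_le_low lt_m' | /xtop_le_low lt_m | <-].
- have := low_lsup_lt_xtop m'; have := ytop_lt_xtop m'.
  by constructor 3; split=> /=; lia.
- have := ytop_lt_xtop m; have := low_lt_tmod m'.
  by have := leq_pmulr (tmod m') (lens_fact_div_gt0 m'l); lia.
- by constructor 2; split=> //; apply: dvdn_mulr.
Qed.

Lemma gen_item m v : gens v -> (forall i, v i <= target m i) -> item m (v i0, v i1).
Proof.
case=> [[m' [l [m'l [-> | ->]]]] | [j /andP[j_gt1 jd] ->]] le_x; rewrite ?ffunE /=.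
- by apply: genA_item m'l _; have := le_x i0; rewrite !ffunE.
- by apply: genB_item m'l _; have := le_x i1; rewrite !ffunE.
- by move: (le_x (Ordinal jd)); rewrite !ffunE /= eqxx; case: j j_gt1 {jd le_x} => [|[|j]].
Qed.

Lemma vsum_genA_genB m l : l \in lens m ->
  vsum (genA m l :: nseq l.-1 (genB m l)) = target m.
Proof.
move=> ml; have := lens_bound ml; have := low_lsup_lt_xtop m => lx lm.
apply/ffunP => i; rewrite vsumE big_cons big_nseq iter_addn_0 !ffunE.
case: i => [[|[|i]] hi] //=; first by lia.
by rewrite -mulnA divnK ?dvdn_lens_fact // add1n.
Qed.

Lemma mass_off_vec2_i0 u v : mass_off i0 (vec2 u v) = v.
Proof.
by rewrite /mass_off (@sum_supp1 _ _ _ i1) ?ffunE // => -[[|[|i]] hi] //=; rewrite ffunE.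
Qed.

Lemma mass_off_vec2_i1 u v : mass_off i1 (vec2 u v) = u.
Proof.
by rewrite /mass_off (@sum_supp1 _ _ _ i0) ?ffunE // => -[[|[|i]] hi] //=; rewrite ffunE.
Qed.

Lemma mass_off_unitv k j : 1 < j < d -> val k < 2 -> mass_off k (unitv j) = 1.
Proof.
case/andP=> j_gt1 jd k_lt2.
rewrite /mass_off (@sum_supp1 _ _ _ (Ordinal jd)) ?ffunE /= ?eqxx //.
  by apply: contraTneq k_lt2 => <- /=; rewrite -leqNgt.
by move=> i _; rewrite -(inj_eq val_inj) ffunE /= => /negbTE->.
Qed.

Lemma gens_mass_off_gt0 v : gens v -> 0 < mass_off i0 v /\ 0 < mass_off i1 v.
Proof.
case=> [[m [l [ml [-> | ->]]]] | [j jd ->]].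
- rewrite mass_off_vec2_i0 mass_off_vec2_i1; have := lens_bound ml.
  by have := low_lsup_lt_xtop m; lia.
- by rewrite mass_off_vec2_i0 mass_off_vec2_i1 muln_gt0 lens_fact_div_gt0.
- by rewrite !mass_off_unitv.
Qed.

Lemma gens_atom v : gens v -> atom (generated gens) v.
Proof.
move=> Gv; have Hv := generated_gen Gv.
have pos0 := generated_mass_off_gt0 (fun w Gw => proj1 (gens_mass_off_gt0 Gw)).
have pos1 := generated_mass_off_gt0 (fun w Gw => proj2 (gens_mass_off_gt0 Gw)).
case: Gv Hv => [[m [l [ml [-> | ->]]]] | [j jd ->]] Hv.
- by apply: atom_of_mass_off1 Hv pos0 _; rewrite mass_off_vec2_i0.
- by apply: atom_of_mass_off1 Hv pos1 _; rewrite mass_off_vec2_i1.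
- by apply: atom_of_mass_off1 Hv pos0 _; rewrite mass_off_unitv.
Qed.

Lemma lengths_target m k : lengths (generated gens) (target m) k <-> k \in lens m.
Proof.
rewrite (lengths_generatedE gens_atom); split=> [[s [<- Gs sx]] | mk]; last first.
  exists (genA m k :: nseq k.-1 (genB m k)); split; last exact: vsum_genA_genB.
    by rewrite /= size_nseq prednK //; have := lens_bound mk; lia.
  by move=> v; rewrite inE => /predU1P[-> | /nseqP[-> _]];
    left; exists m, k; split=> //; [left | right].
rewrite -(size_map (fun v : {ffun 'I_d -> nat} => (v i0, v i1))).
apply: (@size_block_mem (lens m) (lsup m) (low m) (tmod m) (lsup m)`! (xtop m)) => //.
- exact: lens_bound.
- exact: fact_gt0.
- by move=> p /mapP[v sv ->]; apply: gen_item (Gs v sv) _ => i; rewrite -sx leq_vsum.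
- by rewrite big_map -vsumE sx ffunE.
- by rewrite big_map -vsumE sx ffunE.
Qed.

Definition m23 := pickle [:: 2; 3].

Lemma gens_genA_m23 l : l \in [:: 2; 3] -> gens (genA m23 l).
Proof. by move=> l23; left; exists m23, l; rewrite lens_pickle; split=> //; left. Qed.

Lemma full_system_gens : full_system (generated gens).
Proof.
have monH := generated_submonoid gens.
split=> [x Hx | S]; first exact: Pfin_lengths monH (atomic_generated gens_atom) Hx.
case=> [S0 | [S1 | [[k Sk] [S_ge2 [N S_le]]]]].
- exists (vzero d); split; first by case: monH.
  by move=> k; rewrite S0; apply: lengths_vzero.
- have atomA := gens_atom (gens_genA_m23 (mem_head 2 [:: 3])).
  exists (genA m23 2); split; first by case: atomA.
  by move=> k; rewrite S1; apply: lengths_atom.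
- have [s Ss] := @bounded_pred_seq S N.+1 (fun k Sk => S_le k Sk).
  have lensE k' : k' \in lens (pickle s) <-> S k'.
    rewrite lens_pickle mem_filter.
    by split=> [/andP[_ /Ss] // | Sk']; rewrite S_ge2 //=; apply/Ss.
  exists (target (pickle s)); split; last by move=> k'; rewrite lengths_target lensE.
  by apply: (mem_of_lengths (k := k) monH); apply/lengths_target/lensE.
Qed.

Local Open Scope ring_scope.

Lemma toQ_vec2 u v :
  toQ (vec2 u v) = u%:R *: delta_mx 0 i0 + v%:R *: delta_mx 0 i1.
Proof.
apply/rowP => k; rewrite !mxE ffunE.
by case: k => [[|[|k]] hk] /=; rewrite ?mulr1 ?mulr0 ?addr0 ?add0r.
Qed.

Lemma toQ_unitv j (jd : (j < d)%N) : toQ (unitv j) = delta_mx 0 (Ordinal jd).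
Proof. by apply/rowP => k; rewrite !mxE ffunE /= -(inj_eq val_inj). Qed.

Definition rank_basis : seq {ffun 'I_d -> nat} :=
  genA m23 2 :: genA m23 3 :: [seq unitv j | j <- iota 2 (d - 2)].

Lemma gens_rank_basis v : v \in rank_basis -> gens v.
Proof.
rewrite !inE => /orP[/eqP-> | /orP[/eqP-> | /mapP[j]]]; try exact: gens_genA_m23.
by rewrite mem_iota => j_range ->; right; exists j => //; apply/andP; split; lia.
Qed.

(* A_2 - A_3 = e_0 in the block {2, 3}, after which e_1 is an integral
   combination as well. *)
Lemma free_rank_basis : free (map (@toQ d) rank_basis).
Proof.
apply: free_of_span_delta; first by rewrite size_map /= size_map size_iota; lia.
set X := map _ _; have inX v : v \in rank_basis -> toQ v \in <<X>>%VS.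
  by move=> v_in; apply/memv_span/map_f.
have x_gt3 : (3 < xtop m23)%N.
  have := @lens_bound m23 3; rewrite lens_pickle => /(_ isT).
  by have := low_lsup_lt_xtop m23; lia.
set u := ((xtop m23).+1 - 3)%N.
have A2E : toQ (genA m23 2) = u.+1%:R *: delta_mx 0 i0 + 1 *: delta_mx 0 i1.
  by rewrite toQ_vec2 /u; congr (_%:R *: _ + _); lia.
have A3E : toQ (genA m23 3) = u%:R *: delta_mx 0 i0 + 1 *: delta_mx 0 i1.
  by rewrite toQ_vec2.
have e0E : delta_mx 0 i0 = toQ (genA m23 2) - toQ (genA m23 3).
  by rewrite A2E A3E opprD addrACA subrr addr0 -scalerBl -natrB // subSnn scale1r.
have e1E : delta_mx 0 i1 = toQ (genA m23 3) - u%:R *: delta_mx 0 i0.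
  by rewrite A3E [u%:R *: _ + _]addrC addrK scale1r.
have e0X : delta_mx 0 i0 \in <<X>>%VS by rewrite e0E memvB // inX // !inE eqxx ?orbT.
case=> [[|[|j]] hj].
- by rewrite (_ : Ordinal hj = i0) //; apply: val_inj.
- rewrite (_ : Ordinal hj = i1); last exact: val_inj.
  by rewrite e1E memvB ?memvZ // inX // !inE eqxx ?orbT.
- rewrite -toQ_unitv inX // !inE; apply/orP; right; apply/orP; right.
  by apply: map_f; rewrite mem_iota; lia.
Qed.

Lemma has_rank_gens : has_rank (generated gens) d.
Proof.
split=> [|s _ /size_le_of_free]; last by rewrite size_map.
exists rank_basis; split; first by move=> v /gens_rank_basis/generated_gen.
by split; [rewrite /= size_map size_iota; lia | exact: free_rank_basis].
Qed.

End Construction.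

Theorem corollary4p8 (d : nat) (hd : (2 <= d)%N) :
  exists (n : nat) (H : {ffun 'I_n -> nat} -> Prop),
    submonoid H /\ has_rank H d /\ atomic H /\ full_system H.
Proof.
exists d, (generated (@gens d)); split; first exact: generated_submonoid.
split; first exact: has_rank_gens hd.
split; first exact: atomic_generated (gens_atom hd).
exact: full_system_gens hd.
Qed.
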